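(* Let $q\ge 2$, $n\ge 1$ and $h\in F(n,q)$. Then $\kappa^{\min}(h)\le \mathrm{pw}(\mathrm{IG}^*(h))$.
   Context: Let $q\ge 2$, $A=\{0,1,\dots,q-1\}$, $[n]=\{1,\dots,n\}$, and let $F(n,q)$ be the set of all maps $A^n\to A^n$. For $f\in F(m,q)$ and $i\in[m]$, $f_i$ is the $i$-th coordinate function and $f^i(x)=(x_1,\dots,x_{i-1},f_i(x),x_{i+1},\dots,x_m)$; for a word $w=(w_1,\dots,w_t)$ over $[m]$, $f^w=f^{w_t}\circ\cdots\circ f^{w_1}$. $\Pi([m])$ is the set of permutations of $[m]$ written as words $(w_1,\dots,w_m)$. $\mathrm{pr}_{[n]}:A^m\to A^n$ is the projection onto the first $n$ coordinates. For $m\ge n$, $(f,w)$ with $f\in F(m,q)$, $w\in\Pi([m])$ sequentializes $h\in F(n,q)$ if $\mathrm{pr}_{[n]}\circ f^w=h\circ\mathrm{pr}_{[n]}$. $\kappa^{\min}(h)$ is the smallest $k\ge 0$ such that there exist $f\in F(n+k,q)$ and $w\in\Pi([n+k])$ with $(f,w)$ sequentializing $h$. The interaction graph $\mathrm{IG}(h)$ is the directed graph on $[n]$ with an arc $(i,j)$ iff there exist $x,y\in A^n$ with $x_\ell=y_\ell$ for all $\ell\ne i$ and $h_j(x)\ne h_j(y)$; $\mathrm{IG}^*(h)$ is its undirected version ($\{i,j\}$ is an edge, possibly a loop, iff $(i,j)$ or $(j,i)$ is an arc). A path decomposition of an undirected graph $G=(V,E)$ is a sequence $X_1,\dots,X_p$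 of subsets of $V$ such that every vertex lies in some $X_a$, every edge has both endpoints in some common $X_a$, and if $v\in X_a\cap X_b$ with $a<b$ then $v\in X_c$ for all $c\in[a,b]$. Its size is $\max_a|X_a|-1$, and the pathwidth $\mathrm{pw}(G)$ is the minimum size of a path decomposition of $G$. *)

From mathcomp Require Import all_boot.
Set Implicit Arguments. Unset Strict Implicit. Unset Printing Implicit Defensive.

(* A = {0,...,q-1} is 'I_q; coordinates [m] are indexed by 'I_m (0-based). *)
Definition vec (m q : nat) := {ffun 'I_m -> 'I_q}.

Definition upd (m q : nat) (f : vec m q -> vec m q) (i : 'I_m) (x : vec m q)
  : vec m q := [ffun j => if j == i then f x i else x j].

(* f^w = f^{w_t} o ... o f^{w_1} : apply w_1 first. *)
Definition fword (m q : nat) (f : vec m q -> vec m q) (w : seq 'I_m)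
  (x : vec m q) : vec m q := foldl (fun y i => upd f i y) x w.

Definition is_perm_word (m : nat) (w : seq 'I_m) : bool := perm_eq w (enum 'I_m).

Definition proj (n k q : nat) (x : vec (n + k) q) : vec n q :=
  [ffun i => x (lshift k i)].

Definition sequentializes (n k q : nat) (h : vec n q -> vec n q)
  (f : vec (n + k) q -> vec (n + k) q) (w : seq 'I_(n + k)) : Prop :=
  is_perm_word w /\ forall x, proj (fword f w x) = h (proj x).

Definition sequentializable_with (n q : nat) (h : vec n q -> vec n q) (k : nat) : Prop :=
  exists (f : vec (n + k) q -> vec (n + k) q) (w : seq 'I_(n + k)),
    sequentializes h f w.

Definition kappa_min_le (n q : nat) (h : vec n q -> vec n q) (b : nat) : Prop :=
  exists k, k <= b /\ sequentializable_with h k.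

Definition IG_arc (n q : nat) (h : vec n q -> vec n q) (i j : 'I_n) : Prop :=
  exists x y : vec n q, (forall l, l != i -> x l = y l) /\ h x j != h y j.

(* undirected version IG*(h) (loops allowed) *)
Definition IGstar (n q : nat) (h : vec n q -> vec n q) (i j : 'I_n) : Prop :=
  IG_arc h i j \/ IG_arc h j i.

Definition path_decomposition (n : nat) (E : 'I_n -> 'I_n -> Prop)
  (X : seq {set 'I_n}) : Prop :=
  [/\ (forall v : 'I_n, exists2 B, B \in X & v \in B),
      (forall u v : 'I_n, E u v -> exists2 B, B \in X & (u \in B) && (v \in B)) &
      (forall (v : 'I_n) (a b c : nat), a <= c -> c <= b -> b < size X ->
          v \in nth set0 X a -> v \in nth set0 X b -> v \in nth set0 X c)].

Definition pd_size (n : nat) (X : seq {set 'I_n}) : nat :=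
  (\max_(B <- X) #|B|) - 1.

Definition is_pathwidth (n : nat) (E : 'I_n -> 'I_n -> Prop) (p : nat) : Prop :=
  (exists X, path_decomposition E X /\ pd_size X = p) /\
  (forall X, path_decomposition E X -> p <= pd_size X).

(* Order the vertices by the last bag containing them in a path decomposition of
   width p, and recompute the coordinates of h one by one in that order. A coordinate u
   can be updated in place unless, when its turn comes, one of its in-neighbours has
   already been overwritten. The p extra coordinates are written first: extra
   coordinate c stores the sum, in Z/q, of h(x)_u over the problematic u of colour c.
   When the turn of such a v comes, h(x)_v is that sum minus the values of the other
   vertices of its colour, each of which is either already updated or, by properness of
   the colouring, still computable in place. The vertices that clash with v (not yet
   updated but already problematic at v's turn) all lie in the last bag of v and cannot
   fill it, so a greedy colouring with p colours exists. *)

From mathcomp Require Import all_boot ssralg zmodp zify.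
Set Implicit Arguments. Unset Strict Implicit. Unset Printing Implicit Defensive.
Import GRing.Theory.

Definition IG_arcb (n q : nat) (h : vec n q -> vec n q) (i j : 'I_n) : bool :=
  [exists x : vec n q, exists y : vec n q, [forall l, (l != i) ==> (x l == y l)] && (h x j != h y j)].

Lemma IG_arcbP (n q : nat) (h : vec n q -> vec n q) (i j : 'I_n) :
  reflect (IG_arc h i j) (IG_arcb h i j).
Proof.
apply: (iffP existsP) => [[x /existsP[y /andP[/forallP eq_xy neq_h]]]|[x [y [eq_xy neq_h]]]].
  by exists x, y; split=> // l /(implyP (eq_xy l))/eqP.
exists x; apply/existsP; exists y; rewrite neq_h andbT.
by apply/forallP=> l; apply/implyP=> /eq_xy ->.
Qed.

Lemma eq_h_on_in_arcs (n q : nat) (h : vec n q -> vec n q) (u : 'I_n) (x y : vec n q) :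
  (forall w, IG_arcb h w u -> x w = y w) -> h x u = h y u.
Proof.
move: {2}#|_| (erefl #|[set l | x l != y l]|) => d; elim: d x => [|d IHd] x diff_xy eq_in.
  congr (h _ u); apply/ffunP=> l; apply/eqP; apply: contraT => neq_l.
  by have := card0_eq diff_xy l; rewrite !inE neq_l.
have [l diff_l] : exists l, l \in [set l | x l != y l] by apply/card_gt0P; rewrite diff_xy.
pose x' : vec n q := [ffun j => if j == l then y l else x j].
have no_arc : ~~ IG_arcb h l u.
  by apply/negP=> /eq_in x_l; move: diff_l; rewrite inE x_l eqxx.
have -> : h x u = h x' u.
  apply/eqP; apply: contraNT no_arc => neq_h; apply/IG_arcbP.
  by exists x, x'; split=> // j /negbTE j_l; rewrite ffunE j_l.
apply: IHd => [|w /eq_in x_w]; last by rewrite ffunE; case: (w =P l) => [->|].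
have -> : [set j | x' j != y j] = [set j | x j != y j] :\ l.
  by apply/setP=> j; rewrite !inE ffunE; case: (j =P l) => [->|]; rewrite ?eqxx.
by move: diff_xy; rewrite (cardsD1 l) diff_l add1n => -[].
Qed.

Definition overwrite (m q : nat) (W : {set 'I_m}) (z y : vec m q) : vec m q :=
  [ffun j => if j \in W then z j else y j].

Lemma fword_ranked (m q : nat) (f : vec m q -> vec m q) (R : 'I_m -> nat)
    (z y : vec m q) (w : seq 'I_m) :
  sorted (fun i j => R i < R j) w ->
  (forall i, i \in w -> f (overwrite [set j in w | R j < R i] z y) i = z i) ->
  fword f w y = overwrite [set j in w] z y.
Proof.
have ltR_trans : transitive (fun i j => R i < R j) by move=> ? ? ?; apply: ltn_trans.
elim/last_ind: w => [|w i IHw]; first by move=> _ _; apply/ffunP=> j; rewrite !ffunE inE.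
rewrite (sorted_pairwise ltR_trans) pairwise_rcons -(sorted_pairwise ltR_trans).
case/andP=> /allP w_lt_i sorted_w upd_ok.
rewrite /fword foldl_rcons -/(fword f w y).
have -> : fword f w y = overwrite [set j in w] z y.
  apply: IHw => // j j_w; rewrite -upd_ok ?mem_rcons ?in_cons ?j_w ?orbT //.
  congr (f (overwrite _ z y) j); apply/setP=> k; rewrite !inE mem_rcons in_cons.
  case: (k =P i) => [->|] //=.
  by rewrite [R i < R j]ltnNge (ltnW (w_lt_i j j_w)) !andbF.
have set_before_i : [set j in rcons w i | R j < R i] = [set j in w].
  apply/setP=> j; rewrite !inE mem_rcons in_cons.
  case: (j =P i) => [->|_] /=; last by case: (boolP (j \in w)) => // /w_lt_i ->.
  by rewrite ltnn; apply/esym/negP=> /w_lt_i; rewrite ltnn.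
apply/ffunP=> j.
rewrite !ffunE !inE mem_rcons in_cons; case: (j =P i) => [->|] //=.
by rewrite -upd_ok ?mem_rcons ?mem_head // set_before_i.
Qed.

Lemma exists_unused_colour (T : finType) (Z : {set T}) (col : T -> nat) (p : nat) :
  #|Z| < p -> exists2 c, c < p & forall u, u \in Z -> col u != c.
Proof.
move=> small_Z; pose used := [seq col u | u <- enum Z].
have /allPn[c] : ~~ all (fun c => c \in used) (iota 0 p).
  apply: contraTN small_Z => /allP sub_used; rewrite -leqNgt.
  by rewrite cardE -(size_map col) -(size_iota 0 p) uniq_leq_size ?iota_uniq.
rewrite mem_iota add0n => /andP[_ c_lt_p] c_unused; exists c => // u u_Z.
by apply: contraNneq c_unused => <-; rewrite /used map_f ?mem_enum.
Qed.

Lemma greedy_colouring (T : finType) (K : T -> nat) (A : T -> {set T}) (p : nat) :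
  (forall t u, u \in A t -> u != t -> K t < K u) ->
  (forall t, t \in A t -> #|A t| <= p) ->
  exists col : T -> nat, forall t, t \in A t ->
    col t < p /\ forall u, u \in A t -> u != t -> col u != col t.
Proof.
move=> A_later A_small; pose leK a b := K a <= K b.
have leK_trans : transitive leK by move=> ? ? ?; apply: leq_trans.
have colour_seq s : sorted leK s -> exists col : T -> nat, forall t, t \in s -> t \in A t ->
    col t < p /\ forall u, u \in s -> u \in A t -> u != t -> col u != col t.
  elim: s => [|t0 s IHs sorted_t0s]; first by exists (fun=> 0).
  have [col col_ok] := IHs (path_sorted sorted_t0s).
  have /allP t0_min := order_path_min leK_trans sorted_t0s.
  have [c0 c0_ok] : exists c0, t0 \in A t0 ->
      c0 < p /\ forall u, u \in A t0 -> u != t0 -> col u != c0.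
    case: (boolP (t0 \in A t0)) => [t0_A|]; last by exists 0.
    have : #|A t0 :\ t0| < p by move: (A_small t0 t0_A); rewrite (cardsD1 t0) t0_A.
    case/(exists_unused_colour col) => c c_lt_p c_ok; exists c => _; split=> // u u_A u_t0.
    by apply: c_ok; rewrite !inE u_t0.
  exists (fun x => if x == t0 then c0 else col x) => t t_t0s t_A.
  case: (t =P t0) => [eq_t|/eqP t_t0].
    subst t0; have [c0_lt_p c0_fresh] := c0_ok t_A; split=> // u _ u_A u_t0.
    by rewrite (negbTE u_t0); apply: c0_fresh.
  move: t_t0s; rewrite in_cons (negbTE t_t0) /= => t_s.
  have [col_lt_p col_fresh] := col_ok t t_s t_A; split=> // u; rewrite in_cons.
  case: (u =P t0) => [->|_] /= u_s u_A u_t; last exact: col_fresh.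
  by have := A_later t t0 u_A u_t; rewrite ltnNge (t0_min t t_s : K t0 <= K t).
have [col col_ok] := colour_seq _ (sort_sorted (fun a b => leq_total (K a) (K b)) (enum T)).
exists col => t /(col_ok t); rewrite mem_sort mem_enum => /(_ isT) [col_t col_fresh].
by split=> // u; apply/col_fresh; rewrite mem_sort mem_enum.
Qed.

(* [fed_before E K t u]: u has an in-neighbour other than itself that precedes t, so
   from t's turn on, h_u cannot be evaluated on the current state. *)
Definition fed_before (n : nat) (E : rel 'I_n) (K : 'I_n -> nat) (t u : 'I_n) : bool :=
  [exists w, [&& w != u, E w u & K w < K t]].

Definition clash (n : nat) (E : rel 'I_n) (K : 'I_n -> nat) (t u : 'I_n) : bool :=
  (K t <= K u) && fed_before E K t u.

Definition proper_colouring (n : nat) (E : rel 'I_n) (K : 'I_n -> nat) (col : 'I_n -> nat)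
    (p : nat) : Prop :=
  forall t, clash E K t t ->
    col t < p /\ forall u, clash E K t u -> u != t -> col u != col t.

Section PathDecompositionColouring.

Variables (n p : nat) (E : rel 'I_n) (X : seq {set 'I_n}).
Local Notation bag c := (nth set0 X c).

Hypothesis X_cover : forall v, exists2 B, B \in X & v \in B.
Hypothesis X_arc : forall w u, E w u -> exists2 B, B \in X & (w \in B) && (u \in B).
Hypothesis X_convex : forall v a b c, a <= c -> c <= b -> b < size X ->
  v \in bag a -> v \in bag b -> v \in bag c.
Hypothesis X_width : forall B, B \in X -> #|B| <= p.+1.

Lemma earlier_bag_larger (b : nat) :
  b < size X -> bag b != set0 ->
  (forall u, u \in bag b -> exists2 c, c < b & (u \in bag c) && ~~ (bag c \subset bag b)) ->
  exists2 c, c < size X & #|bag b| < #|bag c|.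
Proof.
move=> b_X /set0Pn[u0 u0_b] earlier.
pose P (c : 'I_(size X)) := (c < b) && ~~ (bag c \subset bag b).
have [c0 c0_b /andP[u0_c0 c0_new]] := earlier u0 u0_b.
have P_c0 : P (Ordinal (ltn_trans c0_b b_X)) by rewrite /P c0_b.
case: (arg_maxnP (fun c : 'I_(size X) => nat_of_ord c) P_c0) => i0 /andP[i0_b i0_new] i0_max.
exists i0 => //; apply: proper_card; rewrite properE i0_new andbT.
apply/subsetP=> u u_b; have [c c_b /andP[u_c c_new]] := earlier u u_b.
apply: (X_convex _ _ b_X u_c u_b); last exact: ltnW.
by apply: (i0_max (Ordinal (ltn_trans c_b b_X))); rewrite /P c_b.
Qed.

Definition last_bag (v : 'I_n) : nat := \max_(c < size X | v \in bag c) c.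

Lemma last_bag_max (v : 'I_n) (c : nat) : c < size X -> v \in bag c -> c <= last_bag v.
Proof. by move=> c_X v_c; apply: (@leq_bigmax_cond _ _ _ (Ordinal c_X)). Qed.

Lemma last_bagP (v : 'I_n) : last_bag v < size X /\ v \in bag (last_bag v).
Proof.
have [B B_X v_B] := X_cover v; have B_idx : index B X < size X by rewrite index_mem.
have : 0 < #|[pred c : 'I_(size X) | v \in bag c]|.
  by apply/card_gt0P; exists (Ordinal B_idx); rewrite inE /= nth_index.
case/(eq_bigmax_cond (fun c : 'I_(size X) => nat_of_ord c)) => c v_c max_c.
by have -> : last_bag v = c := max_c.
Qed.

Definition bag_rank (v : 'I_n) : nat := last_bag v * n + v.

Lemma bag_rank_inj : injective bag_rank.
Proof.
move=> a b /(congr1 (modn^~ n)); rewrite /bag_rank !modnMDl !modn_small //.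
exact: val_inj.
Qed.

Lemma bag_rank_lt (a b : 'I_n) : last_bag a < last_bag b -> bag_rank a < bag_rank b.
Proof.
move=> lt_ab; have : (last_bag a).+1 * n <= last_bag b * n by rewrite leq_mul2r lt_ab orbT.
by rewrite /bag_rank mulSn; have := ltn_ord a; lia.
Qed.

Lemma last_bag_le (a b : 'I_n) : bag_rank a <= bag_rank b -> last_bag a <= last_bag b.
Proof. by apply: contraTT; rewrite -!ltnNge => /bag_rank_lt. Qed.

Local Notation clash := (clash E bag_rank).

Lemma clash_witness (t u : 'I_n) : clash t u -> exists w c,
  [/\ c < size X, c <= last_bag t, w \in bag c, u \in bag c & bag_rank w < bag_rank t].
Proof.
case/andP=> _ /existsP[w /and3P[_ /X_arc[B B_X /andP[w_B u_B]] w_t]].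
have B_idx : index B X < size X by rewrite index_mem.
exists w, (index B X); rewrite nth_index //; split=> //.
apply: leq_trans (last_bag_le (ltnW w_t)); apply: last_bag_max B_idx _.
by rewrite nth_index.
Qed.

Lemma clash_last_bag (t u : 'I_n) : clash t u -> u \in bag (last_bag t).
Proof.
move=> clash_tu; have [w [c [c_X c_t _ u_c _]]] := clash_witness clash_tu.
have [u_X u_last] := last_bagP u; move/andP: clash_tu => [t_u _].
exact: X_convex c_t (last_bag_le t_u) u_X u_c u_last.
Qed.

(* A full bag of clashing vertices would make the latest earlier bag reaching outside it
   strictly larger. *)
Lemma card_clash (t : 'I_n) : #|[set u | clash t u]| <= p.
Proof.
rewrite leqNgt; apply/negP=> big_clash.
have [t_X _] := last_bagP t.
have bag_t_clash : bag (last_bag t) = [set u | clash t u].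
  apply/esym/eqP; rewrite eqEcard (leq_trans (X_width (mem_nth set0 t_X)) big_clash) andbT.
  by apply/subsetP=> u; rewrite inE; apply: clash_last_bag.
have bag_t_ne : bag (last_bag t) != set0.
  by rewrite bag_t_clash; apply/set0Pn/card_gt0P; apply: leq_ltn_trans big_clash.
have earlier : forall u, u \in bag (last_bag t) -> exists2 c, c < last_bag t &
    (u \in bag c) && ~~ (bag c \subset bag (last_bag t)).
  move=> u; rewrite bag_t_clash inE => /clash_witness[w [c [c_X c_t w_c u_c w_t]]].
  have w_out : w \notin [set u | clash t u].
    by rewrite inE; apply: contraTN w_t => /andP[t_w _]; rewrite -leqNgt.
  exists c; last by rewrite u_c; apply: contraNN w_out => /subsetP/(_ w w_c).
  by rewrite ltn_neqAle c_t andbT; apply: contraNneq w_out => c_t_eq; rewrite -bag_t_clash -c_t_eq.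
have [c c_X] := earlier_bag_larger t_X bag_t_ne earlier.
by rewrite bag_t_clash ltnNge (leq_trans (X_width (mem_nth set0 c_X))).
Qed.

Lemma bag_rank_colouring : exists col, proper_colouring E bag_rank col p.
Proof.
have [|t _|col col_ok] := @greedy_colouring _ bag_rank (fun t => [set u | clash t u]) p.
- move=> t u; rewrite inE => /andP[t_u _] u_t; rewrite ltn_neqAle t_u andbT.
  by apply: contraNneq u_t => /bag_rank_inj ->.
- exact: card_clash.
exists col => t t_t; have /col_ok[col_t col_fresh] : t \in [set u | clash t u] by rewrite inE.
by split=> // u u_t; apply: col_fresh; rewrite inE.
Qed.

End PathDecompositionColouring.

Lemma split_lshift (m n : nat) (j : 'I_m) : split (lshift n j) = inl j.
Proof. exact: (unsplitK (inl _ j)). Qed.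

Lemma split_rshift (m n : nat) (k : 'I_n) : split (rshift m k) = inr k.
Proof. exact: (unsplitK (inr _ k)). Qed.

Section Sequentialization.

Variables (Q n p : nat) (h : vec n Q.+1 -> vec n Q.+1) (K : 'I_n -> nat) (col : 'I_n -> nat).
Hypothesis K_inj : injective K.
Hypothesis col_proper : proper_colouring (IG_arcb h) K col p.

Local Notation fed := (fed_before (IG_arcb h) K).

Definition checksum (x : vec n Q.+1) (c : 'I_p) : 'I_Q.+1 :=
  (\sum_(u | fed u u && (col u == c)) h x u)%R.

(* The extra coordinate of colour [col v]; junk value 0 when [col v >= p]. *)
Definition colour_slot (y : vec (n + p) Q.+1) (v : 'I_n) : 'I_Q.+1 :=
  (\sum_(c < p | col v == c) y (rshift n c))%R.

Definition node_update (y : vec (n + p) Q.+1) (v : 'I_n) : 'I_Q.+1 :=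
  if fed v v then
    (colour_slot y v - \sum_(u | [&& fed u u, col u == col v & u != v])
       (if (K u < K v)%N then y (lshift p u) else h (proj y) u))%R
  else h (proj y) v.

Definition seq_map (y : vec (n + p) Q.+1) : vec (n + p) Q.+1 :=
  [ffun i => match split i with
             | inl v => node_update y v
             | inr c => checksum (proj y) c end].

Definition seq_rank (i : 'I_(n + p)) : nat :=
  match split i with inl v => p + K v | inr c => c end.

Definition seq_word : seq 'I_(n + p) :=
  sort (fun i j => seq_rank i <= seq_rank j) (enum 'I_(n + p)).

Section UpdateCorrect.

Variables (x : vec n Q.+1) (y : vec (n + p) Q.+1) (v : 'I_n).
Hypothesis y_slots : forall c, y (rshift n c) = checksum x c.
Hypothesis y_nodes : forall u, y (lshift p u) = if K u < K v then h x u else x u.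

Lemma h_proj_not_fed (u : 'I_n) : ~~ fed v u -> K v <= K u -> h (proj y) u = h x u.
Proof.
move=> unfed v_u; apply: eq_h_on_in_arcs => w w_u; rewrite ffunE y_nodes.
case: ifP => // w_v; case: (w =P u) => [eq_wu|/eqP w_ne_u].
  by move: w_v; rewrite eq_wu ltnNge v_u.
by move/negP: unfed; case; apply/existsP; exists w; rewrite w_ne_u w_u w_v.
Qed.

Lemma node_update_correct : node_update y v = h x v.
Proof.
rewrite /node_update; case: ifP => [fed_v|unfed_v]; last exact: h_proj_not_fed (negbT unfed_v) _.
have /col_proper[col_v col_fresh] : clash (IG_arcb h) K v v by rewrite /clash leqnn.
have -> : colour_slot y v = checksum x (Ordinal col_v).
  by rewrite /colour_slot (big_pred1 (Ordinal col_v)) ?y_slots // => c; rewrite eq_sym.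
rewrite /checksum (bigD1 v) /=; last by rewrite fed_v eqxx.
rewrite -[RHS](addrK (\sum_(u | [&& fed u u, col u == col v & u != v]) h x u))%R.
congr (_ + _ - _)%R.
  by apply: eq_bigl => u; rewrite andbA.
apply: eq_bigr => u /and3P[_ /eqP same_col u_v]; rewrite y_nodes.
case: ltnP => // v_u; apply: h_proj_not_fed (v_u); apply/negP=> fed_vu.
have /col_fresh/(_ u_v) : clash (IG_arcb h) K v u by rewrite /clash v_u.
by rewrite same_col eqxx.
Qed.

End UpdateCorrect.

Lemma seq_rank_inj : injective seq_rank.
Proof.
rewrite /seq_rank => i j.
case: (split_ordP i) => [a|c] ->; case: (split_ordP j) => [b|d] -> //.
- by move/addnI/K_inj ->.
- by move=> eq_ad; have := ltn_ord d; rewrite -eq_ad ltnNge leq_addr.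
- by move=> eq_cb; have := ltn_ord c; rewrite eq_cb ltnNge leq_addr.
- by move/val_inj ->.
Qed.

Lemma seq_word_sorted : sorted (fun i j => seq_rank i < seq_rank j) seq_word.
Proof.
have : sorted ltn (map seq_rank seq_word).
  rewrite ltn_sorted_uniq_leq (map_inj_uniq seq_rank_inj) sort_uniq enum_uniq sorted_map.
  by apply: sort_sorted => i j; apply: leq_total.
by rewrite sorted_map.
Qed.

Lemma sequentializable_of_colouring : sequentializable_with h p.
Proof.
exists seq_map, seq_word; split=> [|y]; first by rewrite /is_perm_word perm_sort.
pose z : vec (n + p) Q.+1 := [ffun i => match split i with
  | inl v => h (proj y) v | inr c => checksum (proj y) c end].
have in_word i : i \in seq_word by rewrite mem_sort mem_enum.
rewrite (fword_ranked (R := seq_rank) (z := z) seq_word_sorted) => [|i _].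
  by apply/ffunP=> v; rewrite !ffunE inE in_word split_lshift.
have overwriteE j : overwrite [set j in seq_word | seq_rank j < seq_rank i] z y j =
    if seq_rank j < seq_rank i then z j else y j by rewrite ffunE inE in_word.
rewrite ffunE; move: overwriteE; case: (split_ordP i) => [v|c] -> overwriteE.
all: rewrite [z _]ffunE ?split_lshift ?split_rshift.
- apply: node_update_correct => [c|u]; rewrite overwriteE /seq_rank ?split_lshift ?split_rshift ffunE.
    by rewrite split_rshift ltn_addr.
  by rewrite ltn_add2l split_lshift ffunE.
- congr (checksum _ c); apply/ffunP=> u.
  rewrite ![proj _ _]ffunE overwriteE /seq_rank split_lshift split_rshift.
  by rewrite ltnNge (leq_trans (ltnW (ltn_ord c)) (leq_addr _ _)).
Qed.

End Sequentialization.

Lemma card_bag_le_pd_size (n : nat) (X : seq {set 'I_n}) (B : {set 'I_n}) :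
  B \in X -> #|B| <= (pd_size X).+1.
Proof.
move=> B_X; have : #|B| <= \max_(B <- X) #|B| by apply: leq_bigmax_seq.
by rewrite /pd_size; lia.
Qed.

Theorem mainTheorem12 (q n : nat) (hq : 2 <= q) (hn : 1 <= n)
  (h : vec n q -> vec n q) (p : nat) :
  is_pathwidth (IGstar h) p -> kappa_min_le h p.
Proof.
case=> [[X [[X_cover X_edge X_convex] <-]] _]; exists (pd_size X); split=> //.
case: q hq h X_edge => [//|Q] _ h X_edge.
have X_arc w u : IG_arcb h w u -> exists2 B, B \in X & (w \in B) && (u \in B).
  by move/IG_arcbP=> arc_wu; apply: X_edge; left.
have [col col_ok] := bag_rank_colouring X_cover X_arc X_convex (@card_bag_le_pd_size _ X).
exact: sequentializable_of_colouring (@bag_rank_inj _ X) col_ok.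
Qed.
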